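(* Let $X$ be a Hausdorff space. Then every compact subset of $X$ is finite (i.e. $\mathcal{K}(X)=\mathcal{F}(X)$) if and only if every compact subset of $\mathcal{K}(X)$ is finite (i.e. $\mathcal{K}(\mathcal{K}(X))=\mathcal{F}(\mathcal{K}(X))$).
   Context: $\mathcal{K}(X)$ is the set of nonempty compact subsets of $X$ with the Vietoris topology (generated by $U^+=\{A: A\subset U\}$ and $U^-=\{A: A\cap U\neq\emptyset\}$ for $U$ open in $X$); $\mathcal{F}(X)$ is its subset of nonempty finite sets. *)

From HB Require Import structures.
From mathcomp Require Import all_boot all_order.
From mathcomp Require Import boolp classical_sets functions cardinality.
From mathcomp Require Import topology.
Set Implicit Arguments. Unset Strict Implicit. Unset Printing Implicit Defensive.
Local Open Scope classical_set_scope.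

Record hyperspace (X : topologicalType) := Hyp {
  hyp_set :> set X;
  hyp_nonempty : hyp_set !=set0;
  hyp_compact : compact hyp_set }.

HB.instance Definition _ (X : topologicalType) := gen_eqMixin (hyperspace X).
HB.instance Definition _ (X : topologicalType) := gen_choiceMixin (hyperspace X).

(** Subbasic Vietoris sets: index (true, U) gives U^+ = [set A | A `<=` U],
    index (false, U) gives U^- = [set A | A `&` U !=set0], for U open. *)
Definition vietoris_sub (X : topologicalType) (i : bool * set X) : set (hyperspace X) :=
  if i.1 then [set A : hyperspace X | (A : set X) `<=` i.2]
  else [set A : hyperspace X | (A : set X) `&` i.2 !=set0].

Definition vietoris_index (X : topologicalType) : set (bool * set X) :=
  [set i | open i.2].

HB.instance Definition _ (X : topologicalType) :=
  isSubBaseTopological.Build (hyperspace X) (@vietoris_index X) (@vietoris_sub X).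

(* If C is a compact
   subset of K(X), then its union is compact in X: cover each A in C by
   finitely many members of an open cover; the unions U_A of these finite
   subcovers give Vietoris neighbourhoods U_A^+ of the A's, finitely many of
   which cover C.  As C consists of subsets of its union, C is finite as soon
   as that union is.  Conversely x |-> {x} is a continuous injection of X into
   K(X), since it pulls both U^+ and U^- back to U; it maps a compact A onto a
   compact, hence finite, subset of K(X), so A is finite.  Neither direction
   uses that X is Hausdorff. *)
From HB Require Import structures.
From mathcomp Require Import all_boot all_order.
From mathcomp Require Import boolp classical_sets functions cardinality.
From mathcomp Require Import topology finmap.
Local Open Scope classical_set_scope.

(* [compact_cover] is only stated for pointed spaces; any point, e.g. one of a
   nonempty [A], makes [T] pointed. *)
Section PointedCompactCover.
Variables (T : topologicalType) (t0 : T).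

Definition pointed_at : Type := T.
HB.instance Definition _ := Topological.on pointed_at.
HB.instance Definition _ := isPointed.Build pointed_at t0.

Lemma compact_cover_pointed (A : set T) : compact A <-> cover_compact A.
Proof.
change (@compact pointed_at A <-> @cover_compact pointed_at A).
by rewrite compact_cover.
Qed.

End PointedCompactCover.

Lemma compact_coverP {T : topologicalType} (A : set T) :
  compact A <-> cover_compact A.
Proof.
have [->|/set0P [a _]] := eqVneq A set0; last exact: compact_cover_pointed a A.
by split=> _; [move=> I D f _ _; exists fset0 | exact: compact0].
Qed.

Lemma finite_powerset (T : choiceType) (U : set T) :
  finite_set U -> finite_set [set B | B `<=` U].
Proof.
move=> /finite_fsetP [F ->].
apply: (@sub_finite_set _ _
  ((fun G : {fset T} => [set` G]) @` [set` fpowerset F])).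
  move=> B BF; have fB : finite_set B.
    by apply: (sub_finite_set BF); exact: finite_fset.
  exists (fset_set B); last exact: fset_setK.
  rewrite /= fpowersetE; apply/fsubsetP => y.
  by rewrite in_fset_set // => /set_mem /BF.
exact/finite_image/finite_fset.
Qed.

Lemma finite_set_of_injective_image (T U : Type) (f : T -> U) (A : set T) :
  injective f -> finite_set (f @` A) -> finite_set A.
Proof.
move=> finj fA; apply: (@sub_finite_set _ _ (f @^-1` (f @` A))).
  by move=> x Ax; exists x.
by apply: finite_preimage fA => x y _ _; exact: finj.
Qed.

Section Hyperspace.
Variable X : topologicalType.

Lemma hyp_set_inj : injective (@hyp_set X).
Proof.
move=> [A nA cA] [B nB cB] /= AB; subst B.
by rewrite (Prop_irrelevance nA nB) (Prop_irrelevance cA cB).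
Qed.

Lemma open_vietoris_sub (i : bool * set X) : open i.2 -> open (vietoris_sub i).
Proof.
move=> oi; exists [set vietoris_sub i]; last by rewrite bigcup_set1.
by move=> _ ->; exact: finI_from1.
Qed.

Lemma continuous_vietorisP (T : topologicalType) (f : T -> hyperspace X) :
  (forall i, open i.2 -> open (f @^-1` vietoris_sub i)) -> continuous f.
Proof.
move=> fsub; apply/continuousP => _ [D sD <-]; rewrite preimage_bigcup.
apply: bigcup_open => _ /sD [J sJ <-].
rewrite preimage_bigcap bigcap_fset big_seq.
apply: (big_ind open); [exact: openT | exact: openI | move=> i Ji].
by apply: fsub; have /set_mem := sJ i Ji.
Qed.

Definition hyp1 (x : X) : hyperspace X :=
  Hyp (ex_intro _ x erefl) (@compact_set1 X x).

Lemma hyp1_inj : injective hyp1.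
Proof.
move=> x y /(congr1 (@hyp_set X)) /= xy.
by have : [set y] x by rewrite -xy.
Qed.

Lemma preimage_hyp1_vietoris_sub i : hyp1 @^-1` vietoris_sub i = i.2.
Proof.
rewrite /vietoris_sub; case: i.1; apply/seteqP; split=> x /=.
- by apply.
- by move=> ix _ ->.
- by move=> [_ [-> ix]].
- by exists x.
Qed.

Lemma continuous_hyp1 : continuous hyp1.
Proof.
by apply: continuous_vietorisP => i; rewrite preimage_hyp1_vietoris_sub.
Qed.

Lemma compact_bigcup_hyperspace (C : set (hyperspace X)) : compact C ->
  compact (\bigcup_(A in C) (A : set X)).
Proof.
move=> /compact_coverP cC; apply/compact_coverP => I D f fo Ccov.
pose subcover A (G : {fset I}) :=
  C A -> {subset G <= D} /\ (A : set X) `<=` cover [set` G] f.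
have [g gP] : {g & forall A, subcover A (g A)}.
  apply: choice => A; have [CA|] := pselect (C A); last by exists fset0.
  have /compact_coverP /(_ I D f fo) [|G GD AG] := @hyp_compact X A.
    by move=> x Ax; apply: Ccov; exists A.
  by exists G.
have [E EC CE] : finite_subset_cover C
    (fun A => vietoris_sub (true, cover [set` g A] f)) C.
  apply: cC => A CA; last by exists A => //; exact: (gP A CA).2.
  apply: open_vietoris_sub; apply: bigcup_open => i gAi.
  by apply: fo; apply/set_mem; exact: (gP A CA).1.
have finE : finite_set (\bigcup_(A in [set` E]) [set` g A]).
  by apply: bigcup_finite => [|A _]; exact: finite_fset.
exists (fset_set (\bigcup_(A in [set` E]) [set` g A])).
  move=> i; rewrite in_fset_set // => /set_mem [A EA gAi].
  by have /set_mem CA := EC A EA; exact: (gP A CA).1.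
move=> x [A /CE [B EB BA] /BA [i gBi fxi]].
by exists i => //=; rewrite in_fset_set //; apply/mem_set; exists B.
Qed.

Lemma compact_hyperspace_finite :
  (forall A : set X, compact A -> finite_set A) ->
  forall C : set (hyperspace X), compact C -> finite_set C.
Proof.
move=> finX C /compact_bigcup_hyperspace /finX /finite_powerset finP.
apply: (@finite_set_of_injective_image _ _ _ C hyp_set_inj).
by apply: sub_finite_set finP => _ [A CA <-] x Ax; exists A.
Qed.

Lemma compact_finite_of_hyperspace :
  (forall C : set (hyperspace X), compact C -> finite_set C) ->
  forall A : set X, compact A -> finite_set A.
Proof.
move=> finK A cA; apply: (@finite_set_of_injective_image _ _ _ A hyp1_inj).
apply: finK.
exact: continuous_compact (continuous_subspaceT continuous_hyp1) cA.
Qed.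

End Hyperspace.

Theorem proposition4p7 (X : topologicalType) (hX : hausdorff_space X) :
  (forall A : set X, compact A -> finite_set A) <->
  (forall C : set (hyperspace X), compact C -> finite_set C).
Proof.
split; [exact: compact_hyperspace_finite | exact: compact_finite_of_hyperspace].
Qed.
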